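(* For every positive integer $d$, $$e^*_6(d^2)=36\Bigl(e^*_1(d^2)-\tfrac35\,e^*_1(d_2^2)-\tfrac45\,e^*_1(d_3^2)+\tfrac{12}{25}\,e^*_1(d_6^2)\Bigr),$$ where $d_m=d/\prod_{p\mid m}p^{\nu_p(d)}$ is the largest divisor of $d$ coprime to $m$.
   Context: $\nu_p$ is the $p$-adic valuation. $\gamma_c(d^2)$ is multiplicative in $c$ with $\gamma_1=1$ and: $\gamma_{2^r}(d^2)=2^{r/2}$ if $r\ge2$ even and $\nu_2(d^2)=r-2$; $=2^{(r-1)/2}$ if $r$ odd and $\nu_2(d^2)\ge r-1$; $=0$ otherwise; for odd $p$, $\gamma_{p^r}(d^2)=p^{r/2-1}(p-1)$ if $r\ge2$ even and $\nu_p(d^2)\ge r$; $=p^{(r-1)/2}$ if $r$ odd and $\nu_p(d^2)=r-1$; $=0$ otherwise. $e^*_k(d^2)=\sum_{c\ge1}\frac{\gcd(c,2k)^2}{c^2}\gamma_c(d^2)$. *)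

From Stdlib Require Import Reals.
From mathcomp Require Import all_boot.

Set Implicit Arguments.
Unset Strict Implicit.
Unset Printing Implicit Defensive.

(* gamma_{p^r}(n) for a prime p and r >= 1, where v = nu_p(n). *)
Definition gamma_pp (p r v : nat) : nat :=
  if p == 2 then
    if ~~ odd r then (if (2 <= r) && (v == r - 2) then 2 ^ (r %/ 2) else 0)
    else (if r.-1 <= v then 2 ^ (r.-1 %/ 2) else 0)
  else
    if ~~ odd r then (if (2 <= r) && (r <= v) then p ^ (r %/ 2 - 1) * (p - 1) else 0)
    else (if v == r.-1 then p ^ (r.-1 %/ 2) else 0).

Definition gamma (c n : nat) : nat :=
  \prod_(p <- primes c) gamma_pp p (logn p c) (logn p n).

(* c-th term (c >= 1) of the series defining e*_k(n). *)
Definition estar_term (k n c : nat) : R :=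
  Rmult (Rdiv (pow (INR (gcdn c (2 * k))) 2) (pow (INR c) 2)) (INR (gamma c n)).

Definition dpart (d m : nat) : nat :=
  d %/ \prod_(p <- primes m) p ^ logn p d.

(* The summand t_k(n, c) = gcd(c, 2k)^2 / c^2 * gamma_c(n) is
   multiplicative in c, and every c >= 1 is uniquely 2^a 3^b m with m coprime
   to 6.  When 2k divides 12 we have gcd(m, 2k) = 1, so t_k(n, m) does not
   depend on k.  Hence the series factors as
       e*_k(n) = E_2(k, n) * E_3(k, n) * C(n),
   where E_p(k, n) = sum_a t_k(n, p^a) is a FINITE sum (gamma_{p^a}(n) = 0 as
   soon as a >= nu_p(n) + 3) and C(n) = sum over m coprime to 6 of
   gamma_m(n)/m^2, which converges because gamma_m(n) <= n for odd m.
   Analytically, the factorisation writes the c-th term as a finite linear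
   combination of the dilated series c |-> C-term(c / 2^a 3^b), each of which
   has the same sum C(n).  The local factors satisfy E_2(6,n) = 4 E_2(1,n) - 6,
   E_3(6,n) = 9 E_3(1,n) - 8, E_2(1,n) = 5/2 for odd n, E_3(1,n) = 10/9 for n
   prime to 3, while C(n) only sees nu_p(n) for p >= 5 and is thus the same for
   d^2, d_2^2, d_3^2, d_6^2.  The corollary is then the identity
       (4X - 6)(9Y - 8) = 36 (XY - 3/5 * 5/2 Y - 4/5 * 10/9 X + 12/25 * 5/2 * 10/9). *)

From Stdlib Require Import Reals.
From mathcomp Require Import all_boot all_order all_algebra zify.
From mathcomp Require Import Rstruct.
From mathcomp.algebra_tactics Require Import ring lra.
Import Order.TTheory GRing.Theory Num.Theory.

Lemma gcdnMl_coprime x y z : coprime x y -> gcdn (x * y) z = gcdn x z * gcdn y z.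
Proof.
move=> cxy; apply/eqP; rewrite eqn_dvd; apply/andP; split.
  rewrite muln_gcdr !muln_gcdl !dvdn_gcd ?dvdn_gcdl //=.
  by rewrite dvdn_mulr ?dvdn_mull ?dvdn_gcdr.
rewrite dvdn_gcd dvdn_mul ?dvdn_gcdl //= Gauss_dvd ?dvdn_gcdr //.
by rewrite (coprime_dvdl (dvdn_gcdl _ _)) // (coprime_dvdr (dvdn_gcdl _ _)).
Qed.

Lemma gcdn_pexp p a b q : coprime p q -> b <= a -> gcdn (p ^ a) (p ^ b * q) = p ^ b.
Proof.
move=> cpq ba; rewrite -(subnKC ba) expnD -muln_gcdr.
by rewrite (eqP (coprimeXl _ cpq)) muln1.
Qed.

Lemma prod_primes_partn m n : \prod_(p <- primes m) p ^ logn p n = n`_\pi(m).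
Proof.
rewrite (@widen_partn (maxn n m)) ?leq_maxl // -[RHS]big_filter.
by rewrite filter_pi_of // ltnS leq_maxr.
Qed.

Lemma logn_partn p pi n : 0 < n -> logn p n`_pi = if p \in pi then logn p n else 0.
Proof.
have out rho : p \notin rho -> logn p n`_rho = 0.
  by move=> rho'p; rewrite lognE -mem_primes primes_part mem_filter (negbTE rho'p).
move=> n0; case: ifP => [pi_p|/negbT]; last exact: out.
have := lognM p (part_gt0 pi n) (part_gt0 pi^' n).
by rewrite partnC // (out pi^') ?addn0 // inE /= negbK.
Qed.

Lemma logn_dpart p d q : 0 < d ->
  logn p (dpart d q) = if p \in primes q then 0 else logn p d.
Proof.
move=> d0; rewrite /dpart prod_primes_partn -{1}(partnC \pi(q) d0) mulKn //.
by rewrite logn_partn // inE /=; case: (p \in primes q).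
Qed.

Lemma gammaM x y n : 0 < x -> 0 < y -> coprime x y ->
  gamma (x * y) n = gamma x n * gamma y n.
Proof.
move=> x0 y0 cxy; rewrite /gamma.
have disj : ~~ has [in primes x] (primes y) by rewrite -coprime_has_primes.
have pe : perm_eq (primes (x * y)) (primes x ++ primes y).
  apply: uniq_perm; rewrite ?primes_uniq ?cat_uniq ?primes_uniq ?disj //.
  by move=> p; rewrite primesM // mem_cat.
rewrite (perm_big _ pe) big_cat /=; congr (_ * _); apply: eq_big_seq => p.
  rewrite mem_primes => /and3P [pp _ px].
  by rewrite lognM // [logn p y]logn_coprime ?addn0 // (coprime_dvdl px cxy).
rewrite mem_primes => /and3P [pp _ py]; rewrite coprime_sym in cxy.
by rewrite lognM // [logn p x]logn_coprime // (coprime_dvdl py cxy).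
Qed.

Lemma gamma_pexp p a n : prime p -> 0 < a -> gamma (p ^ a) n = gamma_pp p a (logn p n).
Proof.
move=> pp; case: a => // a _.
by rewrite /gamma primesX // primes_prime // big_seq1 pfactorK.
Qed.

Lemma gamma_eq_logn c n n' :
  {in primes c, forall p, logn p n = logn p n'} -> gamma c n = gamma c n'.
Proof. by move=> h; apply: eq_big_seq => p /h ->. Qed.

(* At an odd prime, gamma_{p^r}(n) <= p^{nu_p(n)}  (false for p = 2). *)
Lemma gamma_pp_le p r v : prime p -> odd p -> gamma_pp p r v <= p ^ v.
Proof.
move=> pp op; have p0 := prime_gt0 pp.
rewrite /gamma_pp (_ : (p == 2) = false); last by apply/eqP=> p2; rewrite p2 in op.
case: (odd r) => /=.
  by case: eqP => // ->; apply: leq_pexp2l => //; lia.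
case: ifP => // /andP [r2 rv].
apply: (@leq_trans (p ^ (r %/ 2 - 1) * p)); first by rewrite leq_mul2l leq_subr orbT.
by rewrite -expnSr leq_pexp2l //; lia.
Qed.

(* Hence gamma_m(n) <= n for odd m: the source of convergence of C(n). *)
Lemma gamma_le m n : 0 < n -> odd m -> gamma m n <= n.
Proof.
move=> n0 om; apply: (@leq_trans n`_\pi(m)); last exact/dvdn_leq/dvdn_part.
rewrite -prod_primes_partn /gamma big_seq [X in _ <= X]big_seq.
apply: leq_prod => p; rewrite mem_primes => /and3P [pp _ pm].
exact: gamma_pp_le (dvdn_odd pm om).
Qed.

Definition part6 (c : nat) : nat := c %/ (2 ^ logn 2 c * 3 ^ logn 3 c).

Lemma part23E c : 2 ^ logn 2 c * 3 ^ logn 3 c = c`_\pi(6).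
Proof. by rewrite -prod_primes_partn (_ : primes 6 = [:: 2; 3]) // big_cons big_seq1. Qed.

Lemma part6_spec c : c = 2 ^ logn 2 c * 3 ^ logn 3 c * part6 c.
Proof. by rewrite /part6 part23E mulnC divnK ?dvdn_part. Qed.

Lemma part6_coprime c : 0 < c -> coprime (part6 c) 6.
Proof.
move=> c0; rewrite /part6 part23E -{1}(partnC \pi(6) c0) mulKn //.
by rewrite coprime_sym -{1}(partn_pi (isT : 0 < 6)) coprime_partC.
Qed.

Lemma logn_part23 a b q : 0 < q -> coprime q 6 ->
  logn 2 (2 ^ a * 3 ^ b * q) = a /\ logn 3 (2 ^ a * 3 ^ b * q) = b.
Proof.
move=> q0; rewrite (_ : 6 = 2 * 3) // coprimeMr !(coprime_sym q) => /andP [c2 c3].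
rewrite !lognM ?muln_gt0 ?expn_gt0 // !pfactorK // !lognX.
by rewrite !logn_coprime // !muln0 !addn0.
Qed.

Local Open Scope ring_scope.

Lemma sum_f_R0E (f : nat -> R) n : sum_f_R0 f n = \sum_(i < n.+1) f i.
Proof.
elim: n => [|n IH] /=; first by rewrite big_ord1.
by rewrite big_ord_recr /= IH RplusE.
Qed.

Lemma infinite_sumE (f : nat -> R) l :
  infinite_sum f l <-> Un_cv (fun n => \sum_(i < n.+1) f i) l.
Proof. by split=> h eps /h [N HN]; exists N => n /HN; rewrite sum_f_R0E. Qed.

Lemma cv_ext (u v : nat -> R) l : u =1 v -> Un_cv u l -> Un_cv v l.
Proof. by move=> uv h eps /h [N HN]; exists N => n; rewrite -uv; exact: HN. Qed.

Lemma cv_const (x : R) : Un_cv (fun _ => x) x.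
Proof. by move=> eps e0; exists 0%N => n _; rewrite /R_dist Rminus_diag Rabs_R0. Qed.

Lemma series_ext (f g : nat -> R) l : f =1 g -> infinite_sum f l -> infinite_sum g l.
Proof.
move=> fg /infinite_sumE h; apply/infinite_sumE; apply: cv_ext h => n.
exact: eq_bigr.
Qed.

Lemma series_scale x (f : nat -> R) l :
  infinite_sum f l -> infinite_sum (fun i => x * f i) (x * l).
Proof.
move=> /infinite_sumE h; apply/infinite_sumE.
apply: cv_ext (CV_mult _ _ _ _ (cv_const x) h) => n; exact: mulr_sumr.
Qed.

Lemma series_big (I : Type) (r : seq I) (u : I -> nat -> R) (l : I -> R) :
  (forall i, infinite_sum (u i) (l i)) ->
  infinite_sum (fun c => \sum_(i <- r) u i c) (\sum_(i <- r) l i).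
Proof.
move=> h; apply/infinite_sumE; elim: r => [|i r IH].
  rewrite big_nil; apply: cv_ext (cv_const 0) => n.
  by symmetry; apply: big1 => c _; rewrite big_nil.
have /infinite_sumE hi := h i.
rewrite [X in Un_cv _ X]big_cons; apply: cv_ext (CV_plus _ _ _ _ hi IH) => n.
by rewrite RplusE -big_split; apply: eq_bigr => c _; rewrite big_cons.
Qed.

Definition dilate (t : nat) (g : nat -> R) (c : nat) : R :=
  if (t %| c)%N then g (c %/ t)%N else 0.

Lemma sum_dilate t g n : (0 < t)%N ->
  \sum_(i < n) dilate t g i.+1 = \sum_(i < n %/ t) g i.+1.
Proof.
move=> t0; elim: n => [|n IH]; first by rewrite div0n !big_ord0.
rewrite big_ord_recr /= IH /dilate divnS //; case: ifP => dv /=.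
  by rewrite dv add1n [RHS]big_ord_recr.
by rewrite addr0 add0n.
Qed.

Lemma series_dilate t g l : (0 < t)%N ->
  infinite_sum (fun i => g i.+1) l -> infinite_sum (fun i => dilate t g i.+1) l.
Proof.
move=> t0 /infinite_sumE h; apply/infinite_sumE => eps /h [N HN].
exists (t * N.+1)%N => n /ssrnat.leP nN; rewrite sum_dilate //.
have -> : (n.+1 %/ t = (n.+1 %/ t).-1.+1)%N by rewrite prednK // divn_gt0 //; lia.
by apply: HN; apply/ssrnat.leP; rewrite -ltnS prednK ?leq_divRL //; lia.
Qed.

(* Telescoping bound: sum_{i <= n} 1/i^2 <= 2 - 2/(n+1). *)
Lemma sum_inv_sq n : \sum_(i < n) ((i.+1)%:R ^+ 2)^-1 <= 2 - 2 / (n.+1)%:R :> R.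
Proof.
elim: n => [|n IH]; first by rewrite big_ord0 divr1 subrr.
rewrite big_ord_recr /=; apply: (le_trans (lerD IH (lexx _))).
set x : R := (n.+1)%:R; have x1 : 1 <= x by rewrite ler1n.
have -> : (n.+2)%:R = x + 1 :> R by rewrite /x -natr1.
clearbody x; rewrite -subr_ge0.
have x0 : 0 < x by apply: lt_le_trans x1.
have x10 : 0 < x + 1 by rewrite ltr_wpDr ?ltW.
have -> : 2 - 2 / (x + 1) - (2 - 2 / x + (x ^+ 2)^-1) = (x - 1) / (x ^+ 2 * (x + 1)).
  by field; rewrite !lt0r_neq0.
by rewrite divr_ge0 ?subr_ge0 // mulr_ge0 ?exprn_ge0 // ltW.
Qed.

Lemma series_inv_sq_bound (f : nat -> R) C :
  (forall c, 0 <= f c <= C / c%:R ^+ 2) -> exists l, infinite_sum (fun i => f i.+1) l.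
Proof.
move=> hf; suff [l hl] : {l | Un_cv (fun n => \sum_(i < n.+1) f i.+1) l}.
  by exists l; apply/infinite_sumE.
apply: growing_cv.
  move=> n; apply/RleP; rewrite [X in _ <= X]big_ord_recr /= lerDl.
  by case/andP: (hf n.+2).
have C0 : 0 <= C by case/andP: (hf 1%N) => f0 /(le_trans f0); rewrite expr1n divr1.
exists (C * 2) => x [n ->]; apply/RleP.
apply: (@le_trans _ _ (\sum_(i < n.+1) C * ((i.+1)%:R ^+ 2)^-1)).
  by apply: ler_sum => i _; case/andP: (hf i.+1).
rewrite -mulr_sumr ler_wpM2l // (le_trans (sum_inv_sq _)) // lerBlDr lerDl.
by rewrite divr_ge0 ?ler0n.
Qed.

Lemma estar_termE k n c :
  estar_term k n c = (gcdn c (2 * k))%:R ^+ 2 / c%:R ^+ 2 * (gamma c n)%:R.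
Proof. by rewrite /estar_term RmultE RdivE !RpowE !INRE. Qed.

Lemma estar_termM k n x y : (0 < x)%N -> (0 < y)%N -> coprime x y ->
  estar_term k n (x * y) = estar_term k n x * estar_term k n y.
Proof.
move=> x0 y0 cxy; rewrite !estar_termE gcdnMl_coprime // gammaM // !natrM.
by field; rewrite !pnatr_eq0 -!lt0n x0 y0.
Qed.

Lemma estar_term_eq_logn k n n' c :
  {in primes c, forall p, logn p n = logn p n'} -> estar_term k n c = estar_term k n' c.
Proof. by move=> h; rewrite !estar_termE (gamma_eq_logn _ _ _ h). Qed.

Lemma estar_term_gcd k k' t n c : gcdn c (2 * k) = (t * gcdn c (2 * k'))%N ->
  estar_term k n c = t%:R ^+ 2 * estar_term k' n c.
Proof. by move=> e; rewrite !estar_termE e natrM exprMn !mulrA. Qed.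

Lemma estar_term1 k n : estar_term k n 1 = 1.
Proof. by rewrite estar_termE gcd1n /gamma big_nil expr1n divr1 mulr1. Qed.

Lemma estar_term_pexp k n p a : prime p -> (0 < a)%N ->
  estar_term k n (p ^ a) =
  (gcdn (p ^ a) (2 * k))%:R ^+ 2 / (p ^ a)%:R ^+ 2 * (gamma_pp p a (logn p n))%:R.
Proof. by move=> pp a0; rewrite estar_termE gamma_pexp. Qed.

Lemma estar_term2 k n : estar_term k n 2 = 1.
Proof.
rewrite (_ : 2 = 2 ^ 1)%N // estar_term_pexp // gcdnMr /gamma_pp /= div0n expn0.
by rewrite mulr1 divff // expf_neq0 // pnatr_eq0.
Qed.

(* The local factors are finite sums: gamma_{p^a}(n) = 0 once a >= nu_p(n) + 3. *)
Lemma estar_term_pexp_vanish k n p a : prime p -> (logn p n + 3 <= a)%N ->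
  estar_term k n (p ^ a) = 0.
Proof.
move=> pp ha; rewrite estar_term_pexp //; last by lia.
suff -> : gamma_pp p a (logn p n) = 0%N by rewrite mulr0.
by rewrite /gamma_pp; case: (p == 2); case: (odd a) => /=; case: ifP => //; lia.
Qed.

(* The summand restricted to c prime to 6; it gives the common factor C(n). *)
Definition core (n m : nat) : R := if coprime m 6 then estar_term 1 n m else 0.

Lemma core_bound n : (0 < n)%N -> forall m, 0 <= core n m <= n%:R / m%:R ^+ 2.
Proof.
move=> n0 m; rewrite /core; case: ifP => [cm|_]; last first.
  by rewrite lexx divr_ge0 ?exprn_ge0 ?ler0n.
have cm2 : coprime m 2 by apply: coprime_dvdr cm.
have om : odd m by rewrite -coprimen2.
rewrite estar_termE (eqP cm2) expr1n mul1r mulrC divr_ge0 ?exprn_ge0 ?ler0n //=.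
by rewrite ler_wpM2r ?invr_ge0 ?exprn_ge0 ?ler0n // ler_nat gamma_le.
Qed.

Lemma core_eq_logn n n' :
  (forall p, prime p -> coprime p 6 -> logn p n = logn p n') -> core n =1 core n'.
Proof.
move=> h m; rewrite /core; case: ifP => // cm; apply: estar_term_eq_logn => p.
by rewrite mem_primes => /and3P [pp _ pm]; apply: h pp (coprime_dvdl pm cm).
Qed.

Lemma core_dpart d q : (0 < d)%N -> (q %| 6)%N -> core (dpart d q ^ 2) =1 core (d ^ 2).
Proof.
move=> d0 q6; apply: core_eq_logn => p pp cp; rewrite !lognX logn_dpart //.
case: ifP => // /[!mem_primes] /and3P [_ _ pq].
by move: cp; rewrite prime_coprime // (dvdn_trans pq q6).
Qed.

Lemma dilate_part23 (g : nat -> R) a b c : (0 < c)%N ->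
  (forall m, ~~ coprime m 6 -> g m = 0) ->
  dilate (2 ^ a * 3 ^ b) g c =
  if (a == logn 2 c) && (b == logn 3 c) then g (part6 c) else 0.
Proof.
move=> c0 g6; rewrite /dilate; case: andP => [[/eqP-> /eqP->] | ne].
  by rewrite {1}part23E dvdn_part.
case: ifP => // dv; apply: g6; apply/negP => cq; apply: ne.
have q0 : (0 < c %/ (2 ^ a * 3 ^ b))%N.
  by rewrite divn_gt0 ?muln_gt0 ?expn_gt0 // dvdn_leq.
by have := logn_part23 a b _ q0 cq; rewrite mulnC divnK // => -[-> ->].
Qed.

Lemma estar_term_split k n c : (2 * k %| 12)%N -> (0 < c)%N ->
  estar_term k n c =
  estar_term k n (2 ^ logn 2 c) * estar_term k n (3 ^ logn 3 c) * core n (part6 c).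
Proof.
move=> dk c0; have cm := part6_coprime _ c0.
have m0 : (0 < part6 c)%N by rewrite lt0n; apply: contraTneq cm => ->.
have [c2 c3] : coprime (part6 c) 2 /\ coprime (part6 c) 3.
  by split; apply: coprime_dvdr cm.
rewrite {1}(part6_spec c) !estar_termM ?muln_gt0 ?expn_gt0 //; last first.
- by rewrite coprimeMl; apply/andP; split; apply/coprimeXl; rewrite coprime_sym.
- by apply/coprimeXl/coprimeXr.
congr (_ * _); rewrite /core cm (@estar_term_gcd k 1 1) ?expr1n ?mul1r //.
rewrite mul1n muln1 (eqP c2); apply/eqP/(coprime_dvdr dk).
by rewrite (_ : 12 = 2 * 2 * 3)%N // !coprimeMr c2 c3.
Qed.

Lemma sum_ord_pick (G : nat -> R) i N :
  \sum_(j < N) (if j == i :> nat then G j else 0) = if (i < N)%N then G i else 0.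
Proof. by rewrite -big_mkcond big_ord1_eq. Qed.

(* The local Euler factor E_p(k, n), truncated where its terms vanish. *)
Definition local_sum (p k n : nat) : R :=
  \sum_(a < (logn p n).+3) estar_term k n (p ^ a).

Lemma estar_term_decomp k n c : (2 * k %| 12)%N -> (0 < c)%N ->
  estar_term k n c =
  \sum_(a < (logn 2 n).+3) \sum_(b < (logn 3 n).+3)
    estar_term k n (2 ^ a) * estar_term k n (3 ^ b) * dilate (2 ^ a * 3 ^ b) (core n) c.
Proof.
move=> dk c0.
pose w a b : R := estar_term k n (2 ^ a) * estar_term k n (3 ^ b) * core n (part6 c).
have core6 m : ~~ coprime m 6 -> core n m = 0 by rewrite /core => /negbTE ->.
transitivity (\sum_(a < (logn 2 n).+3) if a == logn 2 c :> nat then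
    \sum_(b < (logn 3 n).+3) (if b == logn 3 c :> nat then w a b else 0) else 0).
  rewrite (sum_ord_pick (fun a => \sum_(b < (logn 3 n).+3)
    if b == logn 3 c :> nat then w a b else 0)) sum_ord_pick estar_term_split //.
  have vanish p : prime p -> ((logn p n).+3 <= logn p c)%N ->
      estar_term k n (p ^ logn p c) = 0.
    by move=> pp h; apply: estar_term_pexp_vanish => //; rewrite addn3.
  case: ltnP => [_|/(vanish 2 isT)->]; last by rewrite !mul0r.
  by case: ltnP => [_|/(vanish 3 isT)->]; last by rewrite mulr0 mul0r.
apply: eq_bigr => a _; case: eqP => ea; last first.
  by symmetry; apply: big1 => b _; rewrite dilate_part23 // (introF eqP ea) mulr0.
by apply: eq_bigr => b _; rewrite dilate_part23 // ea eqxx /=; case: eqP; rewrite ?mulr0.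
Qed.

Lemma series_estar k n L : (2 * k %| 12)%N -> infinite_sum (fun i => core n i.+1) L ->
  infinite_sum (fun i => estar_term k n i.+1) (local_sum 2 k n * local_sum 3 k n * L).
Proof.
move=> dk hL.
apply: series_ext _ _ _ (fun i => esym (estar_term_decomp k n i.+1 dk (ltn0Sn i))) _.
rewrite /local_sum !RmultE -mulrA mulr_suml; apply: series_big => a.
rewrite mulr_suml mulr_sumr; apply: series_big => b.
rewrite mulrA; apply/series_scale/series_dilate => //.
by rewrite muln_gt0 !expn_gt0.
Qed.

Lemma local_sum_eq_logn p k n n' : prime p -> logn p n = logn p n' ->
  local_sum p k n = local_sum p k n'.
Proof.
move=> pp e; rewrite /local_sum e; apply: eq_bigr => a _; apply: estar_term_eq_logn => q.
rewrite mem_primes => /and3P [qp _]; rewrite Euclid_dvdX // dvdn_prime2 //.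
by case/andP => /eqP->.
Qed.

(* gcd(2^a, 12) = 2 gcd(2^a, 2) for a >= 2, and gcd(3^b, 12) = 3 gcd(3^b, 2) for b >= 1. *)
Lemma estar_term2_6 n a : estar_term 6 n (2 ^ a.+2) = 4%:R * estar_term 1 n (2 ^ a.+2).
Proof.
rewrite (@estar_term_gcd 6 1 2) -?natrX //.
by rewrite (_ : 2 * 6 = 2 ^ 2 * 3)%N // (_ : 2 * 1 = 2 ^ 1 * 1)%N // !gcdn_pexp.
Qed.

Lemma estar_term3_6 n b : estar_term 6 n (3 ^ b.+1) = 9%:R * estar_term 1 n (3 ^ b.+1).
Proof.
rewrite (@estar_term_gcd 6 1 3) -?natrX //.
by rewrite (_ : 2 * 6 = 3 ^ 1 * 4)%N // (_ : 2 * 1 = 3 ^ 0 * 2)%N // !gcdn_pexp.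
Qed.

(* E_2(6, n) = 4 E_2(1, n) - 6 and E_3(6, n) = 9 E_3(1, n) - 8:
   only the terms a < 2 (resp. b < 1) are not rescaled. *)
Lemma local_sum2_6 n : local_sum 2 6 n = 4%:R * local_sum 2 1 n - 6%:R.
Proof.
rewrite /local_sum !(big_ord_recl (logn 2 n).+2) !(big_ord_recl (logn 2 n).+1).
rewrite /= /bump /= !add1n !estar_term1 !estar_term2.
rewrite (eq_bigr (fun i : 'I__ => 4%:R * estar_term 1 n (2 ^ (1 + (1 + i))))) -?mulr_sumr.
  by ring.
by move=> i _; exact: estar_term2_6.
Qed.

Lemma local_sum3_6 n : local_sum 3 6 n = 9%:R * local_sum 3 1 n - 8%:R.
Proof.
rewrite /local_sum !(big_ord_recl (logn 3 n).+2) /= /bump /= !estar_term1.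
rewrite (eq_bigr (fun i : 'I__ => 9%:R * estar_term 1 n (3 ^ (1 + i)))) -?mulr_sumr.
  by ring.
by move=> i _; exact: estar_term3_6.
Qed.

(* Local factors at n prime to p: E_2(1, n) = 1 + 1 + 1/2 and E_3(1, n) = 1 + 1/9. *)
Lemma local_sum2_odd n : logn 2 n = 0%N -> local_sum 2 1 n = 5%:R / 2%:R.
Proof.
move=> n2; rewrite /local_sum n2 !big_ord_recl big_ord0 /= estar_term1 estar_term2.
rewrite estar_term_pexp // n2 /bump /=.
rewrite (_ : gcdn _ _ = 2)%N // (_ : gamma_pp _ _ _ = 2)%N // (_ : 2 ^ _ = 4)%N //.
by field.
Qed.

Lemma local_sum3_coprime n : logn 3 n = 0%N -> local_sum 3 1 n = 10%:R / 9%:R.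
Proof.
move=> n3; rewrite /local_sum n3 !big_ord_recl big_ord0 /= estar_term1.
rewrite !estar_term_pexp // n3 /bump /= (_ : gamma_pp 3 (1 + (1 + 0)) 0 = 0)%N //.
rewrite (_ : gamma_pp 3 (1 + 0) 0 = 1)%N // (_ : gcdn _ _ = 1)%N // (_ : 3 ^ _ = 3)%N //.
by field.
Qed.

Local Close Scope ring_scope.
Local Open Scope R_scope.

Theorem corollary5p4 (d : nat) : (0 < d)%N ->
  exists e6 e1 e1_2 e1_3 e1_6 : R,
    infinite_sum (fun i => estar_term 6 (d ^ 2)%N i.+1) e6 /\
    infinite_sum (fun i => estar_term 1 (d ^ 2)%N i.+1) e1 /\
    infinite_sum (fun i => estar_term 1 (dpart d 2 ^ 2)%N i.+1) e1_2 /\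
    infinite_sum (fun i => estar_term 1 (dpart d 3 ^ 2)%N i.+1) e1_3 /\
    infinite_sum (fun i => estar_term 1 (dpart d 6 ^ 2)%N i.+1) e1_6 /\
    e6 = 36 * (e1 - 3 / 5 * e1_2 - 4 / 5 * e1_3 + 12 / 25 * e1_6).
Proof.
move=> d0; have d2_gt0 : (0 < d ^ 2)%N by rewrite expn_gt0 d0.
have [L core_series] := series_inv_sq_bound _ _ (core_bound _ d2_gt0).
have core_series_dpart q :
    (q %| 6)%N -> infinite_sum (fun i => core (dpart d q ^ 2) i.+1) L.
  by move=> q6; apply: series_ext core_series => i; rewrite core_dpart.
have logn_dpart_sq p q :
    logn p (dpart d q ^ 2) = if p \in primes q then 0%N else logn p (d ^ 2).
  by rewrite !lognX logn_dpart //; case: ifP; rewrite ?muln0.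
pose e k n := local_sum 2 k n * local_sum 3 k n * L.
exists (e 6%N (d ^ 2)%N), (e 1%N (d ^ 2)%N), (e 1%N (dpart d 2 ^ 2)%N),
  (e 1%N (dpart d 3 ^ 2)%N), (e 1%N (dpart d 6 ^ 2)%N).
split; first exact (series_estar 6 _ _ isT core_series).
split; first exact (series_estar 1 _ _ isT core_series).
split; first exact (series_estar 1 _ _ isT (core_series_dpart 2%N isT)).
split; first exact (series_estar 1 _ _ isT (core_series_dpart 3%N isT)).
split; first exact (series_estar 1 _ _ isT (core_series_dpart 6%N isT)).
rewrite /e local_sum2_6 local_sum3_6 (local_sum2_odd (dpart d 2 ^ 2)) ?logn_dpart_sq //.
rewrite (local_sum2_odd (dpart d 6 ^ 2)) ?logn_dpart_sq //.
rewrite (local_sum3_coprime (dpart d 3 ^ 2)) ?logn_dpart_sq //.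
rewrite (local_sum3_coprime (dpart d 6 ^ 2)) ?logn_dpart_sq //.
rewrite -(local_sum_eq_logn 3 1 (d ^ 2) (dpart d 2 ^ 2)) ?logn_dpart_sq //.
rewrite -(local_sum_eq_logn 2 1 (d ^ 2) (dpart d 3 ^ 2)) ?logn_dpart_sq //.
rewrite !RmultE !RminusE !RplusE !RdivE !IZRposE !INRE /=.
by field.
Qed.
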